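(* Let $\phi$ be an embedding of the complete bipartite graph $K_{m,n}$ into a projective plane $\pi$. Then the set of complement lines of $\phi$ is disjoint from the set of lines onto which the edges of $K_{m,n}$ are mapped.
   Context: A finite projective plane: points and lines such that any two distinct points lie on a unique line and any two distinct lines meet in a unique point (with standard nondegeneracy). An embedding of a simple graph $G=(V,E)$ into $\pi$ is an injective map $\phi$ from $V$ to the points of $\pi$ such that the induced map $\overline{\phi}$ sending an edge $ab$ to the line through $\phi(a),\phi(b)$ is injective on $E$; the lines $\overline{\phi}(E)$ are the embedded edges. A complement line of the embedding $\phi$ is a line through $\phi(v)$ and $\phi(w)$ for distinct vertices $v,w$ of $G$ with $vw\notin E$. *)

From mathcomp Require Import all_boot.
Set Implicit Arguments. Unset Strict Implicit. Unset Printing Implicit Defensive.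

Definition collinear3 (P L : finType) (inc : P -> L -> bool) (p q r : P) :=
  exists l : L, [&& inc p l, inc q l & inc r l].

Record proj_plane (P L : finType) (inc : P -> L -> bool) : Prop := {
  pp_line : forall p q : P, p != q -> exists! l : L, inc p l && inc q l;
  pp_point : forall l m : L, l != m -> exists! p : P, inc p l && inc p m;
  pp_nondeg : exists p1 p2 p3 p4 : P,
      [/\ ~ collinear3 inc p1 p2 p3, ~ collinear3 inc p1 p2 p4,
          ~ collinear3 inc p1 p3 p4 & ~ collinear3 inc p2 p3 p4]
}.

Definition simple_graph (V : finType) (adj : rel V) :=
  symmetric adj /\ irreflexive adj.

Definition Kmn (m n : nat) : rel ('I_m + 'I_n)%type :=
  fun x y => match x, y with
             | inl _, inr _ | inr _, inl _ => true
             | _, _ => false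
             end.

(* l is the line through phi a and phi b (a <> b, phi injective, so this
   line is unique by the projective plane axiom). *)
Definition on_line (V P L : finType) (inc : P -> L -> bool) (phi : V -> P)
  (a b : V) (l : L) := inc (phi a) l && inc (phi b) l.

Definition embedding (V P L : finType) (inc : P -> L -> bool) (adj : rel V)
  (phi : V -> P) : Prop :=
  injective phi /\
  forall (a b c d : V) (l : L), adj a b -> adj c d ->
    on_line inc phi a b l -> on_line inc phi c d l ->
    ((a == c) && (b == d)) || ((a == d) && (b == c)).

Definition embedded_edge (V P L : finType) (inc : P -> L -> bool) (adj : rel V)
  (phi : V -> P) (l : L) : Prop :=
  exists a b : V, adj a b /\ on_line inc phi a b l.

Definition complement_line (V P L : finType) (inc : P -> L -> bool) (adj : rel V)
  (phi : V -> P) (l : L) : Prop :=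
  exists v w : V, [/\ v != w, ~~ adj v w & on_line inc phi v w l].

From mathcomp Require Import all_boot.

(* Two distinct non-adjacent vertices of K_{m,n} lie in the same part, so every
   edge has an endpoint x adjacent to both.  If the line through them also
   contained an edge, it would contain phi x, and the two distinct edges vx and
   wx would be mapped to the same line. *)

Lemma embedding_common_neighbour (V P L : finType) (inc : P -> L -> bool)
    (adj : rel V) (phi : V -> P) (v w x : V) (l : L) :
  embedding inc adj phi -> v != w -> adj v x -> adj w x ->
  on_line inc phi v w l -> ~~ inc (phi x) l.
Proof.
move=> [_ edge_inj] vw vx wx /andP[vl wl]; apply/negP => xl.
have := edge_inj v x w x l vx wx; rewrite /on_line vl wl xl => /(_ isT isT).
by rewrite (negbTE vw) /= => /andP[/eqP vx_eq /eqP xw_eq]; rewrite vx_eq xw_eq eqxx in vw.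
Qed.

Lemma Kmn_edge_common_neighbour {m n : nat} {v w a b : 'I_m + 'I_n} :
  ~~ Kmn v w -> Kmn a b ->
  (Kmn v a && Kmn w a) || (Kmn v b && Kmn w b).
Proof. by case: v w a b => ? [] ? [] ? [] ?. Qed.

Theorem lemma3p7 (P L : finType) (inc : P -> L -> bool) (m n : nat)
  (phi : ('I_m + 'I_n)%type -> P) :
  proj_plane inc -> embedding inc (@Kmn m n) phi ->
  forall l : L, complement_line inc (@Kmn m n) phi l ->
    ~ embedded_edge inc (@Kmn m n) phi l.
Proof.
move=> _ emb l [v [w [vw nvw vwl]]] [a [b [ab /andP[al bl]]]].
have off_l x : Kmn v x -> Kmn w x -> ~~ inc (phi x) l.
  by move=> vx wx; apply: embedding_common_neighbour emb vw vx wx vwl.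
case/orP: (Kmn_edge_common_neighbour nvw ab) => /andP[va wa].
- by move: (off_l a va wa); rewrite al.
- by move: (off_l b va wa); rewrite bl.
Qed.
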